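(* Let $f:(0,\infty)\to(0,\infty)$ be a function which is constant on the interval $(0,4)$ and such that, for some positive real number $K$, $f(x)=K\left(\frac{x}{2}-1\right)f\left(\frac{x}{2}-1\right)$ for all $x\ge4$. Then there exists a positive real number $c$ such that $f(x)>x^{\log_2(x)/2-c}$ for every sufficiently large real number $x$. *)

From Stdlib Require Export Reals.
Open Scope R_scope.

Definition log2 (x : R) : R := ln x / ln 2.

(** The recurrence maps [x] to [y = x/2 - 1], i.e. it halves [x + 2], so
    [u = ln (x + 2)] drops by [ln 2] per step while [ln f] gains
    [ln K + ln y >= u - ln (6 / K)].  Hence [ln f (x)] is bounded below by a
    quadratic [b + u^2 / (2 ln 2) - a u]: its drop [u - ln 2 / 2 - a ln 2]
    under [u |-> u - ln 2] is at most that gain once [a] is large enough, and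
    [b] is chosen to make the bound hold where [f] is constant.  Since
    [u = ln x + O(1)], this quadratic exceeds [(log2 x / 2 - a - 1) ln x] for
    large [x]. *)

From Stdlib Require Import Reals Lra.
From Coquelicot Require Import Rcomplements.
Open Scope R_scope.

Lemma halving_induction (P : R -> Prop) :
  (forall x, 0 < x < 4 -> P x) ->
  (forall x, 4 <= x -> P (x / 2 - 1) -> P x) ->
  forall x, 0 < x -> P x.
Proof.
  intros Pbase Pstep.
  assert (Pbounded : forall n x, 0 < x < 4 + INR n -> P x).
  { induction n as [|n IHn]; intros x Hx.
    - apply Pbase. simpl in Hx. lra.
    - rewrite S_INR in Hx. pose proof (pos_INR n).
      destruct (Rlt_or_le x 4) as [Hx4 | Hx4].
      + apply Pbase. lra.
      + apply Pstep; [lra |]. apply IHn. lra. }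
  intros x Hx. destruct (INR_unbounded x) as [n Hn].
  apply (Pbounded n). pose proof (pos_INR n). lra.
Qed.

Lemma ln2_pos : 0 < ln 2.
Proof. rewrite <- ln_1. apply ln_increasing; lra. Qed.

Definition log_profile (a b x : R) : R :=
  b + ln (x + 2) ^ 2 / (2 * ln 2) - a * ln (x + 2).

Lemma log_profile_half_shift (a b x : R) : -2 < x ->
  log_profile a b (x / 2 - 1)
  = log_profile a b x - ln (x + 2) + ln 2 / 2 + a * ln 2.
Proof.
  intros Hx. pose proof ln2_pos.
  unfold log_profile.
  replace (x / 2 - 1 + 2) with ((x + 2) / 2) by field.
  rewrite ln_div by lra.
  field. lra.
Qed.

Lemma log_profile_le_on_base (a b x : R) : 0 <= a -> 0 < x < 4 ->
  log_profile a b x <= b + ln 6 ^ 2 / (2 * ln 2).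
Proof.
  intros Ha Hx. pose proof ln2_pos.
  assert (Hu0 : 0 < ln (x + 2)) by (rewrite <- ln_1; apply ln_increasing; lra).
  assert (Hu6 : ln (x + 2) <= ln 6) by (apply ln_le; lra).
  assert (Hsq : ln (x + 2) ^ 2 / (2 * ln 2) <= ln 6 ^ 2 / (2 * ln 2)).
  { apply Rmult_le_compat_r; [left; apply Rinv_0_lt_compat; lra | nra]. }
  unfold log_profile. nra.
Qed.

Lemma ln_half_shift_ge (x : R) : 4 <= x -> ln (x + 2) - ln 6 <= ln (x / 2 - 1).
Proof.
  intros Hx. rewrite <- ln_div by lra.
  apply ln_le; [apply Rdiv_lt_0_compat |]; lra.
Qed.

Lemma log_profile_dominates_power_exponent (a b : R) : 0 <= a ->
  exists X, forall x, X <= x ->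
    (log2 x / 2 - (a + 1)) * ln x < log_profile a b x.
Proof.
  intros Ha. pose proof ln2_pos.
  set (d := Rabs (a * ln 3 - b) + 1).
  assert (Hd : a * ln 3 - b + 1 <= d /\ 1 <= d).
  { pose proof (Rle_abs (a * ln 3 - b)). pose proof (Rabs_pos (a * ln 3 - b)).
    unfold d. lra. }
  exists (exp d). intros x Hx.
  assert (Hx0 : 0 < x) by (pose proof (exp_pos d); lra).
  assert (Hv : d <= ln x) by (rewrite <- (ln_exp d); apply ln_le; [apply exp_pos | lra]).
  assert (Hx1 : 1 <= x).
  { rewrite <- (exp_ln x), <- exp_0 by lra. left. apply exp_increasing. lra. }
  assert (Hvu : ln x <= ln (x + 2)) by (apply ln_le; lra).
  assert (Huv : ln (x + 2) <= ln 3 + ln x).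
  { rewrite <- ln_mult by lra. apply ln_le; lra. }
  assert (Hsq : ln x ^ 2 / (2 * ln 2) <= ln (x + 2) ^ 2 / (2 * ln 2)).
  { apply Rmult_le_compat_r; [left; apply Rinv_0_lt_compat; lra | nra]. }
  replace ((log2 x / 2 - (a + 1)) * ln x)
    with (ln x ^ 2 / (2 * ln 2) - a * ln x - ln x) by (unfold log2; field; lra).
  unfold log_profile. nra.
Qed.

Section HalvingRecurrence.

Variables (f : R -> R) (K C : R).
Hypothesis f_pos : forall x, 0 < x -> 0 < f x.
Hypothesis f_const : forall x, 0 < x < 4 -> f x = C.
Hypothesis K_pos : 0 < K.
Hypothesis f_rec : forall x, 4 <= x -> f x = K * (x / 2 - 1) * f (x / 2 - 1).

Lemma log_profile_le_ln_f (a b : R) :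
  0 <= a -> ln 6 - ln K - ln 2 / 2 <= a * ln 2 ->
  b + ln 6 ^ 2 / (2 * ln 2) <= ln C ->
  forall x, 0 < x -> log_profile a b x <= ln (f x).
Proof.
  intros Ha Ha_step Hb. apply halving_induction.
  - intros x Hx. rewrite f_const by exact Hx.
    pose proof (log_profile_le_on_base a b x Ha Hx). lra.
  - intros x Hx IH.
    assert (Hy : 0 < x / 2 - 1) by lra.
    rewrite f_rec, !ln_mult by (try apply Rmult_lt_0_compat; auto).
    rewrite log_profile_half_shift in IH by lra.
    pose proof (ln_half_shift_ge x Hx). lra.
Qed.

End HalvingRecurrence.

Theorem lemma8p6 (f : R -> R) (K : R) :
  (forall x, 0 < x -> 0 < f x) ->
  (exists C, forall x, 0 < x < 4 -> f x = C) ->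
  0 < K ->
  (forall x, 4 <= x -> f x = K * (x / 2 - 1) * f (x / 2 - 1)) ->
  exists c, 0 < c /\
    exists X, forall x, X <= x -> f x > Rpower x (log2 x / 2 - c).
Proof.
  intros f_pos [C f_const] K_pos f_rec.
  pose proof ln2_pos.
  set (a := Rabs (ln 6 - ln K - ln 2 / 2) / ln 2).
  set (b := ln C - ln 6 ^ 2 / (2 * ln 2)).
  assert (Ha : 0 <= a /\ ln 6 - ln K - ln 2 / 2 <= a * ln 2).
  { unfold a. split.
    - apply Rdiv_le_0_compat; [apply Rabs_pos | lra].
    - replace (Rabs (ln 6 - ln K - ln 2 / 2) / ln 2 * ln 2)
        with (Rabs (ln 6 - ln K - ln 2 / 2)) by (field; lra).
      apply Rle_abs. }
  destruct Ha as [Ha0 Ha_step].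
  assert (Hlow := log_profile_le_ln_f f K C f_pos f_const K_pos f_rec a b Ha0 Ha_step
                    ltac:(unfold b; lra)).
  destruct (log_profile_dominates_power_exponent a b Ha0) as [X HX].
  exists (a + 1). split; [lra |].
  exists (Rmax X 1). intros x Hx.
  assert (Hx0 : 0 < x) by (pose proof (Rmax_r X 1); lra).
  unfold Rpower. rewrite <- (exp_ln (f x)) by (apply f_pos; exact Hx0).
  apply exp_increasing.
  specialize (HX x ltac:(pose proof (Rmax_l X 1); lra)).
  specialize (Hlow x Hx0). lra.
Qed.
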